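(* Let $b_0\ge1$ be an integer, $m>1$, and $0<\gamma<1/m$, and set $\alpha=-(\log\gamma)/\log m$. Let $B_0,B_1,\dots$ be independent random variables with $B_k$ uniformly distributed on the interval $[0,2b_0m^k-1]$ (mean $b_0m^k-1/2$), and let $\kappa$ be an independent random variable on $\{0,1,2,\dots\}$ with $\mathbb{P}[\kappa=k]=\gamma^k-\gamma^{k+1}$. Let $\Omega=\sum_{k=0}^{\kappa}B_k$. Then $\Omega$ has a wide-sense heavy-tailed distribution. Moreover, for real $c\ge 0$, $\mathbb{E}[\Omega^c]$ is infinite if $c\ge\alpha$ and finite if $0\le c<\alpha$.
   Context: This is the per-packet backoff of IEEE 802.11 with infinitely many backoff stages ($K=\infty$), multiplicative factor $m$, initial contention window $2b_0$ and collision probability $\gamma$ (which in the model satisfies $\gamma<1/m$, so $\alpha>1$). A random variable with density $f$ on $[0,\infty)$ is called wide-sense heavy-tailed if $\int_0^\infty e^{tx}f(x)\,dx=\infty$ for all $t>0$. *)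

From HB Require Import structures.
From mathcomp Require Import all_boot all_order all_algebra.
From mathcomp Require Import all_classical all_reals all_analysis.
Set Implicit Arguments. Unset Strict Implicit. Unset Printing Implicit Defensive.
Import Order.TTheory GRing.Theory Num.Theory.
Local Open Scope classical_set_scope.
Local Open Scope ring_scope.

Definition indep_kappa_B d (T : measurableType d) (R : realType)
  (P : probability T R) (B : nat -> T -> R) (kappa : T -> nat) : Prop :=
  forall (s : seq nat) (A : nat -> set R) (S : set nat),
    uniq s -> (forall k, measurable (A k)) ->
    P ([set w | S (kappa w)] `&` \bigcap_(k in [set k | k \in s]) (B k @^-1` A k))
    = (P [set w | S (kappa w)] *
       \big[*%E/1%E]_(k <- s) P (B k @^-1` A k))%E.

Definition uniform_on_0 d (T : measurableType d) (R : realType)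
  (P : probability T R) (X : T -> R) (L : R) : Prop :=
  forall A : set R, measurable A ->
    P (X @^-1` A) = (lebesgue_measure (A `&` `[0%R, L]%classic) * (L^-1)%:E)%E.

Definition Omega d (T : measurableType d) (R : realType)
  (B : nat -> T -> R) (kappa : T -> nat) : T -> R :=
  fun w => \sum_(0 <= k < (kappa w).+1) B k w.

Definition wide_sense_heavy_tailed d (T : measurableType d) (R : realType)
  (P : probability T R) (X : T -> R) : Prop :=
  forall t : R, 0 < t -> (\int[P]_w (expR (t * X w))%:E)%E = +oo%E.

From HB Require Import structures.
From mathcomp Require Import all_boot all_order all_algebra.
From mathcomp Require Import all_classical all_reals all_analysis.
From mathcomp Require Import ring lra measurable_realfun.
Import Order.TTheory GRing.Theory Num.Theory.
Local Open Scope classical_set_scope.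
Local Open Scope ring_scope.

(* Condition on kappa = k.  Almost surely every B_j lies in its window [0, L_j],
   and the L_j grow geometrically, so Omega <= K m^k on that event; with
   probability P[kappa = k]/2 the last phase lands in the upper half of its
   window, so Omega >= L_k/2 >= m^k/2.  Hence E[g(Omega)] is comparable to
   sum_k g(m^k) gamma^k.  For g(x) = x^c this is a geometric series of ratio
   gamma m^c, finite exactly when c < alpha; for g(x) = exp(t x) its terms
   dominate (t m^k/2)^n/n! gamma^k, which stay bounded below once gamma m^n >= 1. *)

Lemma sum_expr_le_div (R : realFieldType) (m : R) n : 1 < m ->
  \sum_(0 <= j < n) m ^+ j <= m ^+ n / (m - 1).
Proof.
move=> m1; rewrite ler_pdivlMr ?subr_gt0//.
have -> : (\sum_(0 <= j < n) m ^+ j) * (m - 1) = m ^+ n - 1.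
  elim: n => [|n IH]; first by rewrite big_geq// mul0r expr0 subrr.
  by rewrite big_nat_recr//= mulrDl IH exprS; ring.
by rewrite lerBlDr lerDl.
Qed.

Lemma exprn_div_fact_le_expR (R : realType) (x : R) n :
  0 <= x -> x ^+ n / n`!%:R <= expR x.
Proof.
case: n => [|n] x0; last by apply: le_trans (expR_ge1Dxn n x0); rewrite lerDr.
by rewrite expr0 fact0 divr1 (le_trans _ (expR_ge1Dx x)) ?lerDl.
Qed.

Lemma ge1_mul_powR (R : realType) (m g c : R) : 1 < m -> 0 < g ->
  (1 <= g * m `^ c) = (- ln g / ln m <= c).
Proof.
move=> m1 g0; have lnm : 0 < ln m by exact: ln_gt0.
rewrite /powR gt_eqF ?(lt_trans ltr01 m1)// -{1}(@lnK _ g) ?posrE//.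
by rewrite -expRD -expR0 ler_expR ler_pdivrMr// -[RHS]subr_ge0 opprK addrC.
Qed.

Lemma lt1_mul_powR (R : realType) (m g c : R) : 1 < m -> 0 < g ->
  (g * m `^ c < 1) = (c < - ln g / ln m).
Proof. by move=> m1 g0; rewrite ltNge ge1_mul_powR// -ltNge. Qed.

Lemma nneseries_ge_cst_pinfty (R : realType) (u : nat -> \bar R) (e : R) :
  0 < e -> (forall k, (e%:E <= u k)%E) -> (\sum_(k <oo) u k = +oo)%E.
Proof.
move=> e0 ue.
have u0 k : (0 <= u k)%E by apply: le_trans (ue k); rewrite lee_fin ltW.
have ge n : ((n%:R * e)%:E <= \sum_(k <oo) u k)%E.
  apply: le_trans (nneseries_lim_ge n (fun k _ _ => u0 k)).
  have := @lee_sum R nat (fun=> e%:E) u (index_iota 0 n) xpredT (fun k _ => ue k).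
  by apply: le_trans; rewrite big_mkord sumEFin sumr_const card_ord mulr_natl.
have : (0 <= \sum_(k <oo) u k)%E by apply: nneseries_ge0 => k _ _; exact: u0.
case E : (\sum_(k <oo) u k)%E => [r| |] //= r0.
have := ge (Num.bound (r / e)).+1; rewrite E lee_fin -ler_pdivlMr// => H.
have := archi_boundP (divr_ge0 r0 (ltW e0)) => /(le_lt_trans H).
by rewrite ltr_nat ltnNge leqnSn.
Qed.

Lemma nneseries_le_geometric_lty (R : realType) (u : nat -> \bar R) (C r : R) :
  0 <= C -> 0 < r -> r < 1 -> (forall k, (0 <= u k)%E) ->
  (forall k, (u k <= (C * r ^+ k)%:E)%E) -> (\sum_(k <oo) u k < +oo)%E.
Proof.
move=> C0 r0 r1 u0 uC.
apply: (@le_lt_trans _ _ (\sum_(k <oo) (C * r ^+ k)%:E)%E).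
  by apply: lee_nneseries => // k _ _.
apply: (@le_lt_trans _ _ (C * (1 - r)^-1)%:E); last exact: ltry.
apply: lime_le.
  by apply: is_cvg_nneseries => k _ _; rewrite lee_fin mulr_ge0// exprn_ge0// ltW.
apply: nearW => n /=; rewrite sumEFin lee_fin.
have := @geometric_le_lim R n C r C0 r0; rewrite ger0_norm ?(ltW r0)// => /(_ r1).
by rewrite /series/= /geometric/=.
Qed.

Lemma le_mul_expr_of_le (R : realFieldType) (h g Q G : R) k :
  0 <= h -> 0 <= g -> 1 <= g * Q -> h * Q ^+ k <= G -> h <= G * g ^+ k.
Proof.
move=> h0 g0 gQ hG; apply: le_trans (ler_wpM2r (exprn_ge0 k g0) hG).
by rewrite -mulrA -exprMn [Q * g]mulrC ler_peMr ?exprn_ege1.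
Qed.

Lemma exprn_powR (R : realType) (a c : R) n : 0 <= a ->
  (a ^+ n) `^ c = (a `^ c) ^+ n.
Proof.
by move=> a0; rewrite -powR_mulrn// -powRrM mulrC powRrM powR_mulrn ?powR_ge0.
Qed.

Section backoff_delay.
Context {R : realType} {d : measure_display} {T : measurableType d}.
Context {P : probability T R} {b0 : nat} {m gamma : R}.
Context {B : nat -> T -> R} {kappa : T -> nat}.
Hypotheses (b0_ge1 : (1 <= b0)%N) (m_gt1 : 1 < m).
Hypotheses (gamma_gt0 : 0 < gamma) (gamma_lt1 : gamma < 1).

Let L k := 2 * b0%:R * m ^+ k - 1.
Let F k := [set w | kappa w = k].
Let Om := Omega B kappa.

Hypothesis mB : forall k, measurable_fun setT (B k).
Hypothesis unifB : forall k, uniform_on_0 P (B k) (L k).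
Hypothesis mF : forall k, measurable (F k).
Hypothesis PF : forall k, P (F k) = (gamma ^+ k - gamma ^+ k.+1)%:E.
Hypothesis indepB : indep_kappa_B P B kappa.

Let m_gt0 : 0 < m. Proof. exact: lt_trans m_gt1. Qed.

Lemma expr_le_L k : m ^+ k <= L k.
Proof.
have mk1 : 1 <= m ^+ k by rewrite exprn_ege1// ltW.
have : 2 * m ^+ k <= 2 * b0%:R * m ^+ k.
  by rewrite -mulrA ler_pM2l// ler_peMl ?ler1n// (le_trans ler01).
rewrite /L; lra.
Qed.

Lemma L_gt0 k : 0 < L k.
Proof. by apply: lt_le_trans (expr_le_L k); rewrite exprn_gt0. Qed.

Lemma prob_B_itv k (a b : R) : 0 <= a -> a <= b -> b <= L k ->
  P (B k @^-1` `[a, b]) = ((b - a) / L k)%:E.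
Proof.
move=> a0 ab bL; rewrite unifB; last exact: measurable_itv.
rewrite setIidl; last first.
  move=> x /=; rewrite !in_itv/= => /andP[ax xb].
  by apply/andP; split; [apply: le_trans ax|apply: le_trans bL].
rewrite lebesgue_measure_itv/= lte_fin.
have [ab'|ba] := ltP a b; first by rewrite -EFinD -EFinM.
have -> : a = b by apply/le_anti/andP.
by rewrite subrr mul0r mul0e.
Qed.

Lemma B_in_range_ae : \forall w \ae P, forall k, 0 <= B k w <= L k.
Proof.
apply: ae_foralln => k; exists (B k @^-1` (~` `[0, L k])); split.
- rewrite -[X in measurable X]setTI; apply: mB => //.
  by apply: measurableC; exact: measurable_itv.
- rewrite [LHS](unifB k); last by apply: measurableC; exact: measurable_itv.
  by rewrite setICl measure0 mul0e.
- by move=> w /= Bw; rewrite in_itv.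
Qed.

Lemma measurable_Omega : measurable_fun setT Om.
Proof.
move=> _ Y mY; rewrite setTI.
have -> : Om @^-1` Y =
    \bigcup_k (F k `&` (fun w => \sum_(0 <= j < k.+1) B j w) @^-1` Y).
  apply/seteqP; split; first by move=> w Yw; exists (kappa w).
  by move=> w [k _ [/= kw Yw]]; rewrite /Om /Omega /= kw.
apply: bigcupT_measurable => k; apply: measurableI => //.
have mS : measurable_fun setT (fun w => \sum_(0 <= j < k.+1) B j w).
  exact: measurable_sum.
by have := mS measurableT Y mY; rewrite setTI.
Qed.

Lemma ge0_integral_kappa_sum (f : T -> \bar R) :
  measurable_fun setT f -> (forall w, (0 <= f w)%E) ->
  (\int[P]_w f w = \sum_(k <oo) \int[P]_(w in F k) f w)%E.
Proof.
move=> mf f0; have FT : \bigcup_k F k = setT.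
  by apply/seteqP; split => // w _; exists (kappa w).
have := @ge0_integral_bigcup d T R P F f mF; rewrite /= FT => <- //.
by move=> i j _ _ [w [/= <- <-]].
Qed.

Let upper_window k j :=
  if j == k then `[L j / 2, L j]%classic else `[0, L j]%classic.

Let E k := [set w | [set k] (kappa w)] `&`
  \bigcap_(j in [set j | j \in index_iota 0 k.+1]) (B j @^-1` upper_window k j).

Lemma measurable_E k : measurable (E k).
Proof.
apply: measurableI; first exact: mF.
apply: bigcap_measurable; first by exists 0%N; rewrite /= mem_index_iota.
move=> j _; rewrite -[X in measurable X]setTI; apply: mB => //.
by rewrite /upper_window; case: ifP => _; exact: measurable_itv.
Qed.

Lemma prob_E k : P (E k) = ((gamma ^+ k - gamma ^+ k.+1) / 2)%:E.
Proof.
have L2 j : 0 <= L j / 2 by rewrite divr_ge0// ltW// L_gt0.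
have L2L j : L j / 2 <= L j by have := L_gt0 j; lra.
rewrite /E indepB //; last 2 first.
- exact: iota_uniq.
- by move=> j; rewrite /upper_window; case: ifP => _; exact: measurable_itv.
rewrite PF big_nat_recr //= big_seq big1; last first.
  move=> j; rewrite mem_index_iota => /andP[_ jk].
  rewrite /upper_window (ltn_eqF jk) prob_B_itv ?(ltW (L_gt0 j))//.
  by rewrite subr0 divff// gt_eqF// L_gt0.
rewrite /upper_window eqxx prob_B_itv // mul1e -EFinM; congr EFin.
by have := L_gt0 k; move: (L k) => x x0; field; rewrite gt_eqF.
Qed.

Lemma Omega_ge_E k w : E k w -> L k / 2 <= Om w.
Proof.
move=> [/= kw Bw].
have Bj j : (j <= k)%N -> upper_window k j (B j w).
  by move=> jk; apply: Bw; rewrite /= mem_index_iota.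
rewrite /Om /Omega kw big_nat_recr//=.
have := Bj k (leqnn k); rewrite /upper_window eqxx /= in_itv/= => /andP[Bk _].
suff : 0 <= \sum_(0 <= j < k) B j w by move=> ?; lra.
rewrite big_seq; apply: sumr_ge0 => j; rewrite mem_index_iota => /andP[_ jk].
by have := Bj j (ltnW jk); rewrite /upper_window (ltn_eqF jk) /= in_itv/= => /andP[].
Qed.

Lemma integral_Omega_pinfty (g : R -> R) (e : R) :
  measurable_fun setT g -> (forall x, 0 <= g x) ->
  (forall x y, 0 <= x -> x <= y -> g x <= g y) -> 0 < e ->
  (forall k, e <= g (L k / 2) * gamma ^+ k) ->
  (\int[P]_w (g (Om w))%:E = +oo)%E.
Proof.
move=> mg g0 g_mono e0 ge.
have mf : measurable_fun setT (fun w => (g (Om w))%:E).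
  by apply/measurable_EFinP; exact: measurableT_comp mg measurable_Omega.
rewrite ge0_integral_kappa_sum //; last by move=> w; rewrite lee_fin.
apply: (@nneseries_ge_cst_pinfty _ _ (e * ((1 - gamma) / 2))) => [|k].
  by rewrite mulr_gt0// divr_gt0// subr_gt0.
have mE := measurable_E k.
have lowE : ((e * ((1 - gamma) / 2))%:E <= (g (L k / 2))%:E * P (E k))%E.
  rewrite prob_E -EFinM lee_fin.
  have -> : (gamma ^+ k - gamma ^+ k.+1) / 2 = gamma ^+ k * ((1 - gamma) / 2).
    by rewrite exprS; ring.
  by rewrite [leRHS]mulrA ler_wpM2r ?ge// divr_ge0// subr_ge0 ltW.
apply: (@le_trans _ _ (\int[P]_(w in E k) (cst (g (L k / 2))%:E) w)%E).
  by rewrite integral_cst//; exact: lowE.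
apply: (@le_trans _ _ (\int[P]_(w in E k) (g (Om w))%:E)%E).
  apply: ge0_le_integral => //.
  - by move=> w _; rewrite lee_fin.
  - exact: measurable_funS mf.
  move=> w Ew; rewrite lee_fin g_mono ?Omega_ge_E//.
  by rewrite divr_ge0// ltW// L_gt0.
apply: ge0_subset_integral; [done|exact: mF| | |by move=> w []].
- exact: measurable_funS mf.
- by move=> w _; rewrite lee_fin.
Qed.

Let K := 2 * b0%:R * (m / (m - 1)).

Lemma Omega_range w :
  (forall k, 0 <= B k w <= L k) -> 0 <= Om w <= K * m ^+ kappa w.
Proof.
move=> Bw; apply/andP; split.
  by rewrite /Om /Omega big_seq sumr_ge0// => j _; case/andP: (Bw j).
apply: (@le_trans _ _ (\sum_(0 <= j < (kappa w).+1) 2 * b0%:R * m ^+ j)).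
  by apply: ler_sum => j _; case/andP: (Bw j) => _; rewrite /L; lra.
have -> : K * m ^+ kappa w = 2 * b0%:R * (m ^+ (kappa w).+1 / (m - 1)).
  by rewrite /K exprS; field; rewrite subr_eq0 gt_eqF.
by rewrite -mulr_sumr ler_wpM2l ?mulr_ge0//; exact: sum_expr_le_div.
Qed.

Lemma integral_kappa_powR_Omega_le c k : 0 <= c ->
  (\int[P]_(w in F k) (Om w `^ c)%:E <= (K `^ c * (gamma * m `^ c) ^+ k)%:E)%E.
Proof.
move=> c0.
have mf : measurable_fun setT (fun w => (Om w `^ c)%:E).
  apply/measurable_EFinP.
  exact: measurableT_comp (measurable_powR c) measurable_Omega.
have K0 : 0 <= K.
  by rewrite /K !mulr_ge0 ?ler0n ?invr_ge0 ?subr_ge0 ?(ltW m_gt0) ?(ltW m_gt1).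
apply: (@le_trans _ _ (\int[P]_(w in F k) (cst ((K * m ^+ k) `^ c)%:E) w)%E).
  apply: ae_ge0_le_integral => //.
  - by move=> w _; rewrite lee_fin powR_ge0.
  - exact: measurable_funS mf.
  - by move=> w _; rewrite lee_fin powR_ge0.
  apply: filterS B_in_range_ae => w /Omega_range /andP[Om0 OmK] kw.
  by rewrite -kw lee_fin; apply: ge0_ler_powR; rewrite ?nnegrE// (le_trans Om0).
rewrite integral_cst//.
have -> : (((K * m ^+ k) `^ c)%:E * P (F k) =
           ((K * m ^+ k) `^ c * (gamma ^+ k - gamma ^+ k.+1))%:E)%E.
  by rewrite PF.
rewrite lee_fin (powRM _ K0 (exprn_ge0 k (ltW m_gt0))) exprn_powR ?(ltW m_gt0)//.
rewrite exprMn mulrCA [leRHS]mulrC; apply: ler_wpM2l.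
  by rewrite mulr_ge0 ?exprn_ge0 ?powR_ge0.
by rewrite exprS lerBlDr lerDl mulr_ge0 ?exprn_ge0 ?(ltW gamma_gt0).
Qed.

Lemma integral_powR_Omega_lty c : 0 <= c -> gamma * m `^ c < 1 ->
  (\int[P]_w (Om w `^ c)%:E < +oo)%E.
Proof.
move=> c0 r1; rewrite ge0_integral_kappa_sum; last 2 first.
- apply/measurable_EFinP.
  exact: measurableT_comp (measurable_powR c) measurable_Omega.
- by move=> w; rewrite lee_fin powR_ge0.
apply: (@nneseries_le_geometric_lty _ _ (K `^ c) (gamma * m `^ c)) => //.
- exact: powR_ge0.
- by rewrite mulr_gt0// powR_gt0.
- by move=> k; apply: integral_ge0 => w _; rewrite lee_fin powR_ge0.
- by move=> k; exact: integral_kappa_powR_Omega_le.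
Qed.

Lemma integral_powR_Omega_pinfty c : 0 <= c -> 1 <= gamma * m `^ c ->
  (\int[P]_w (Om w `^ c)%:E = +oo)%E.
Proof.
move=> c0 gmc; apply: (@integral_Omega_pinfty (fun x => x `^ c) (2^-1 `^ c)).
- exact: measurable_powR.
- by move=> x; exact: powR_ge0.
- by move=> x y x0 xy; apply: ge0_ler_powR; rewrite ?nnegrE// (le_trans x0).
- by rewrite powR_gt0.
move=> k; apply: (@le_mul_expr_of_le _ _ gamma (m `^ c)) => //; first exact: ltW.
have mk0 : 0 <= m ^+ k by rewrite exprn_ge0// ltW.
rewrite -exprn_powR ?(ltW m_gt0)// -powRM ?invr_ge0//.
apply: ge0_ler_powR; rewrite ?nnegrE ?mulr_ge0 ?invr_ge0 ?divr_ge0 ?(ltW (L_gt0 k))//.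
by rewrite mulrC ler_wpM2r ?invr_ge0 ?expr_le_L.
Qed.

Lemma heavy_tailed_Omega : wide_sense_heavy_tailed P Om.
Proof.
move=> t t0.
have [n gmn] : exists n : nat, 1 <= gamma * m ^+ n.
  have a0 : 0 <= - ln gamma / ln m.
    by rewrite divr_ge0 ?oppr_ge0 ?ln_le0 ?ltW ?ln_gt0.
  exists (Num.bound (- ln gamma / ln m)).
  by rewrite -(powR_mulrn _ (ltW m_gt0)) ge1_mul_powR// (ltW (archi_boundP a0)).
apply: (@integral_Omega_pinfty (fun x => expR (t * x)) ((t / 2) ^+ n / n`!%:R)).
- apply: measurableT_comp; first exact: measurable_expR.
  by apply: measurable_funM => //; exact: measurable_id.
- by move=> x; exact: expR_ge0.
- by move=> x y _ xy; rewrite ler_expR ler_wpM2l// ltW.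
- by rewrite divr_gt0 ?exprn_gt0 ?divr_gt0 ?ltr0n ?fact_gt0.
move=> k; apply: (@le_mul_expr_of_le _ _ gamma (m ^+ n)) => //.
- by rewrite divr_ge0 ?exprn_ge0 ?divr_ge0 ?ltW.
- exact: ltW.
have -> : (t / 2) ^+ n / n`!%:R * (m ^+ n) ^+ k = (t * (m ^+ k / 2)) ^+ n / n`!%:R.
  by rewrite -exprM mulnC exprM !exprMn; ring.
apply: (le_trans (@exprn_div_fact_le_expR _ _ n _)).
  by rewrite mulr_ge0 ?divr_ge0 ?exprn_ge0 ?ltW.
by rewrite ler_expR ler_pM2l// ler_pM2r ?invr_gt0// expr_le_L.
Qed.

End backoff_delay.

Theorem theorem2 (R : realType) (d : measure_display) (T : measurableType d)
  (P : probability T R) (b0 : nat) (m gamma : R)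
  (B : nat -> T -> R) (kappa : T -> nat) :
  (1 <= b0)%N -> 1 < m -> 0 < gamma -> gamma < m^-1 ->
  (forall k, measurable_fun setT (B k)) ->
  (forall k, uniform_on_0 P (B k) (2 * b0%:R * m ^+ k - 1)) ->
  (forall k, measurable [set w | kappa w = k]) ->
  (forall k, P [set w | kappa w = k] = (gamma ^+ k - gamma ^+ k.+1)%:E) ->
  indep_kappa_B P B kappa ->
  let alpha := - ln gamma / ln m in
  wide_sense_heavy_tailed P (Omega B kappa) /\
  (forall c : R, 0 <= c ->
     (alpha <= c -> (\int[P]_w ((Omega B kappa w) `^ c)%:E)%E = +oo%E) /\
     (c < alpha -> (\int[P]_w ((Omega B kappa w) `^ c)%:E < +oo)%E)).
Proof.
move=> b0_ge1 m_gt1 gamma_gt0 gamma_lt_invm mB unifB mF PF indepB alpha.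
have gamma_lt1 : gamma < 1.
  by apply: lt_trans gamma_lt_invm _; rewrite invf_lt1// (lt_trans ltr01).
split; first by apply: (heavy_tailed_Omega (b0 := b0) (m := m) (gamma := gamma)).
move=> c c0; split => [alpha_le_c|c_lt_alpha].
  apply: (integral_powR_Omega_pinfty (b0 := b0) (m := m) (gamma := gamma)) => //.
  by rewrite ge1_mul_powR.
apply: (integral_powR_Omega_lty (b0 := b0) (m := m) (gamma := gamma)) => //.
by rewrite lt1_mul_powR.
Qed.
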